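(* Let $r$ and $k$ be positive integers with $r+k\equiv 0\pmod 2$ and $k\le r$, let $H$ be the complete graph with $V(H)=[r+k]$, and let $\mathbf{E}=(E_0,E_1,E_2)$ be an ordered partition of $E(H)$. If $|E_1|+2|E_2|<2(r+k-1)$, then $H$ contains a perfect matching which is also a good matching for $\mathbf{E}$.
   Context: $[m]=\{1,\dots,m\}$. An ordered partition $(E_0,E_1,E_2)$ of a set $X$ is a triple of pairwise disjoint (possibly empty) sets with union $X$. A matching $M$ of $H$ is a good matching for $\mathbf{E}=(E_0,E_1,E_2)$ if $M\cap E_2=\emptyset$ and $|M\cap E_1|\le 1$. *)

From mathcomp Require Import all_boot.
Set Implicit Arguments. Unset Strict Implicit. Unset Printing Implicit Defensive.

Definition Kedges (n : nat) : {set {set 'I_n}} := [set e : {set 'I_n} | #|e| == 2].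

Definition ordered_partition (T : finType) (X E0 E1 E2 : {set T}) : Prop :=
  [/\ [disjoint E0 & E1], [disjoint E0 & E2], [disjoint E1 & E2]
    & E0 :|: E1 :|: E2 = X].

Definition is_matching (n : nat) (M : {set {set 'I_n}}) : Prop :=
  M \subset Kedges n /\
  forall e f : {set 'I_n}, e \in M -> f \in M -> e != f -> [disjoint e & f].

Definition is_perfect_matching (n : nat) (M : {set {set 'I_n}}) : Prop :=
  is_matching M /\ forall v : 'I_n, exists2 e, e \in M & v \in e.

Definition good_matching (n : nat) (M E0 E1 E2 : {set {set 'I_n}}) : Prop :=
  M :&: E2 = set0 /\ #|M :&: E1| <= 1.

From mathcomp Require Import all_boot.
From mathcomp Require Import zify.

Set Implicit Arguments.
Unset Strict Implicit.
Unset Printing Implicit Defensive.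

(* For even n, K_n has a 1-factorization into n - 1 perfect matchings: with
   m = n - 1 odd and vertex m playing the role of infinity, the edge {a, b}
   gets colour a + b mod m, and the edge {a, m} gets colour 2a mod m.  Each
   edge lies in exactly one colour class, so the total weight
   |E1| + 2|E2| < 2(n - 1) is spread over n - 1 classes and some class
   carries weight at most 1: it avoids E2 and meets E1 at most once. *)

Lemma sum_cardI_partition (I T : finType) (F : I -> {set T}) (X E : {set T}) :
  (forall x, x \in X -> exists i, x \in F i) ->
  (forall i j x, x \in F i -> x \in F j -> i = j) ->
  E \subset X -> \sum_i #|F i :&: E| = #|E|.
Proof.
move=> F_cover F_disj sEX.
have cardIE i : #|F i :&: E| = \sum_(x in E) (x \in F i).
  by rewrite -big_mkcondr sum1_card; apply: eq_card => x; rewrite !inE andbC.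
under eq_bigr => i _ do rewrite cardIE.
rewrite exchange_big /= -sum1_card; apply: eq_bigr => x xE.
have [i xFi] := F_cover x (subsetP sEX x xE).
rewrite (bigD1 i) //= xFi big1 // => j /negbTE ji.
by case: (boolP (x \in F j)) => // /F_disj/(_ xFi) eq_ji; rewrite eq_ji eqxx in ji.
Qed.

Lemma exists_light_class (I T : finType) (F : I -> {set T}) (X E1 E2 : {set T}) :
  (forall x, x \in X -> exists i, x \in F i) ->
  (forall i j x, x \in F i -> x \in F j -> i = j) ->
  E1 \subset X -> E2 \subset X ->
  #|E1| + 2 * #|E2| < 2 * #|I| ->
  exists i, F i :&: E2 = set0 /\ #|F i :&: E1| <= 1.
Proof.
move=> F_cover F_disj sE1 sE2 light.
case: (boolP [exists i, (F i :&: E2 == set0) && (#|F i :&: E1| <= 1)]).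
  by case/existsP => i /andP[/eqP avoid meet]; exists i.
move=> /existsPn heavy; suff : 2 * #|I| <= #|E1| + 2 * #|E2| by lia.
rewrite -(sum_cardI_partition F_cover F_disj sE1).
rewrite -(sum_cardI_partition F_cover F_disj sE2) big_distrr -big_split /=.
rewrite mulnC -sum1_card big_distrl /=; apply: leq_sum => i _.
move: (heavy i); rewrite negb_and -ltnNge -card_gt0 => /orP[]; lia.
Qed.

Definition factor_color (m a b : nat) :=
  if a == m then (2 * b) %% m else if b == m then (2 * a) %% m else (a + b) %% m.

Lemma factor_colorC m a b : factor_color m a b = factor_color m b a.
Proof.
rewrite /factor_color addnC.
by case: (eqVneq a m) => [->|_] //; case: (eqVneq b m) => [->|_].
Qed.

Section OddModulus.

Variable m : nat.
Hypothesis odd_m : odd m.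

Lemma double_mod_inj y z : y < m -> z < m -> (2 * y) %% m = (2 * z) %% m -> y = z.
Proof.
wlog le_yz : y z / y <= z => [sym ym zm eq_yz|ym zm eq_yz].
  case: (leqP y z) => [le_yz|/ltnW le_zy]; first exact: sym.
  by apply/esym/sym.
have : m %| z - y.
  rewrite -(@Gauss_dvdr m 2) ?coprimen2 // mulnBr -eqn_mod_dvd ?eq_yz //.
  by rewrite leq_mul2l le_yz orbT.
by case: (posnP (z - y)) => [|/dvdn_leq h /h]; lia.
Qed.

Lemma factor_color_inj x y z : x <= m -> y <= m -> z <= m -> x != y -> x != z ->
  factor_color m x y = factor_color m x z -> y = z.
Proof.
move=> xm ym zm /eqP xy /eqP xz; rewrite /factor_color.
case: (eqVneq x m) => [x_m|/eqP x_m]; first by apply: double_mod_inj; lia.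
have cancel_x u v : u < m -> v < m -> (x + u) %% m = (x + v) %% m -> u = v.
  by move=> um vm /eqP; rewrite eqn_modDl !modn_small // => /eqP.
rewrite mul2n -addnn.
case: (eqVneq y m) => [y_m|/eqP y_m]; case: (eqVneq z m) => [z_m|/eqP z_m] //;
  by move=> /cancel_x; lia.
Qed.

End OddModulus.

Definition one_factor n (c : nat) : {set {set 'I_n}} :=
  [set e : {set 'I_n} | [exists a : 'I_n, exists b : 'I_n,
     [&& a != b, e == [set a; b] & factor_color n.-1 a b == c]]].

Lemma one_factorP n c e :
  reflect (exists a b : 'I_n, [/\ a != b, e = [set a; b] & factor_color n.-1 a b = c])
          (e \in one_factor n c).
Proof.
rewrite inE; apply: (iffP existsP) => [[a /existsP[b /and3P[ab /eqP-> /eqP]]]|].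
  by exists a, b.
case=> a [b [ab -> col]]; exists a; apply/existsP; exists b.
by rewrite ab eqxx col eqxx.
Qed.

Lemma one_factor_at n c e x : e \in one_factor n c -> x \in e ->
  exists y : 'I_n, [/\ x != y, e = [set x; y] & factor_color n.-1 x y = c].
Proof.
move=> /one_factorP[a [b [ab -> col]]]; rewrite !inE => /orP[] /eqP->.
  by exists b.
by exists a; rewrite eq_sym setUC factor_colorC.
Qed.

Lemma one_factor_disj n c1 c2 e :
  e \in one_factor n c1 -> e \in one_factor n c2 -> c1 = c2.
Proof.
move=> /one_factorP[a [b [ab -> <-]]] eF2.
have [y [ay /setP eq_ab <-]] := one_factor_at eF2 (set21 a b).
have : b \in [set a; y] by rewrite -eq_ab set22.
by rewrite !inE eq_sym (negbTE ab) => /eqP ->.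
Qed.

Lemma edge_in_one_factor n e : e \in Kedges n ->
  exists c : 'I_n.-1, e \in one_factor n c.
Proof.
rewrite inE => /cards2P[a [b [ab ->]]].
have m_gt0 : 0 < n.-1.
  apply: contraNT ab; rewrite -leqNgt -subn1 => n_le1; apply/eqP/ord_inj.
  by have := ltn_ord a; have := ltn_ord b; lia.
exists (Ordinal (ltn_pmod (factor_color n.-1 a b) m_gt0)).
apply/one_factorP; exists a, b; split=> //=.
by rewrite /factor_color; case: ifP => _; [|case: ifP => _]; rewrite modn_mod.
Qed.

Section EvenOrder.

Variable n : nat.
Hypothesis odd_m : odd n.-1.

Lemma one_factor_matching c : is_matching (one_factor n c).
Proof.
split=> [|e f eF fF ef].
  by apply/subsetP => _ /one_factorP[a [b [ab -> _]]]; rewrite inE cards2 ab.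
apply/pred0P => x /=; apply/negbTE/negP => /andP[xe xf].
have [y [xy ey cy]] := one_factor_at eF xe.
have [z [xz fz cz]] := one_factor_at fF xf.
have le_pred (i : 'I_n) : i <= n.-1 by have := ltn_ord i; lia.
have yz : y = z.
  apply: ord_inj; apply: (@factor_color_inj n.-1 odd_m x) => //.
  exact: etrans cy (esym cz).
by move: ef; rewrite ey fz yz eqxx.
Qed.

Lemma one_factor_cover c (v : 'I_n) : c < n.-1 -> exists2 e, e \in one_factor n c & v \in e.
Proof.
move=> cm; set m := n.-1 in cm *.
have vn := ltn_ord v.
have mn : m < n by rewrite /m; lia.
have edge_at (w : 'I_n) : v != w -> factor_color m v w = c ->
    exists2 e, e \in one_factor n c & v \in e.
  move=> vw col; exists [set v; w]; last exact: set21.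
  by apply/one_factorP; exists v, w.
case: (eqVneq (v : nat) m) => [vm|vm].
  (* a = c / 2 mod m, which exists because m is odd *)
  pose a := if odd c then (c + m)./2 else c./2.
  have [am dbl_a] : a < m /\ (2 * a) %% m = c.
    rewrite /a; case oc: (odd c).
      have := odd_double_half (c + m); rewrite oddD oc odd_m /= -muln2 => h.
      have -> : 2 * (c + m)./2 = c + m by lia.
      by split; [lia | rewrite modnDr modn_small].
    have := odd_double_half c; rewrite oc /= -muln2 => h.
    have -> : 2 * c./2 = c by lia.
    by split; [lia | rewrite modn_small].
  have an : a < n by lia.
  apply: (edge_at (Ordinal an)); first by apply/eqP => /(congr1 val) /=; lia.
  by rewrite /factor_color vm eqxx.
pose y := (c + m - v) %% m.
have ym : y < m by rewrite ltn_pmod //; lia.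
have vy_col : (v + y) %% m = c.
  rewrite /y modnDmr.
  have -> : v + (c + m - v) = c + m by lia.
  by rewrite modnDr modn_small.
case: (eqVneq y v) => [yv|yv].
  apply: (edge_at (Ordinal mn)); first by apply/eqP => /(congr1 val) /=; lia.
  by rewrite /factor_color /= eqxx (negbTE vm) mul2n -addnn -{2}yv.
have yn : y < n by lia.
apply: (edge_at (Ordinal yn)); first by apply/eqP => /(congr1 val) /=; lia.
rewrite /factor_color /= (negbTE vm).
by case: eqP => [|_ //]; lia.
Qed.

Lemma one_factor_perfect (c : 'I_n.-1) : is_perfect_matching (one_factor n c).
Proof.
by split=> [|v]; [exact: one_factor_matching | exact: one_factor_cover].
Qed.

End EvenOrder.

Lemma even_complete_good_perfect_matching n (E0 E1 E2 : {set {set 'I_n}}) :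
  0 < n -> ~~ odd n -> ordered_partition (Kedges n) E0 E1 E2 ->
  #|E1| + 2 * #|E2| < 2 * n.-1 ->
  exists M : {set {set 'I_n}}, is_perfect_matching M /\ good_matching M E0 E1 E2.
Proof.
move=> n_gt0 even_n [_ _ _ E_part] light.
have odd_m : odd n.-1 by move: even_n; rewrite -(prednK n_gt0) /= negbK.
have sE1 : E1 \subset Kedges n by rewrite -E_part -setUA subsetU // subsetUl orbT.
have sE2 : E2 \subset Kedges n by rewrite -E_part subsetUr.
have F_disj (c1 c2 : 'I_n.-1) e : e \in one_factor n c1 -> e \in one_factor n c2 -> c1 = c2.
  by move=> eF1 eF2; apply/val_inj/(one_factor_disj eF1 eF2).
have [|c [avoid_E2 meet_E1]] :=
  exists_light_class (@edge_in_one_factor n) F_disj sE1 sE2.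
  by rewrite card_ord.
by exists (one_factor n c); split; [exact: one_factor_perfect | split].
Qed.

Theorem lemma11 (r k : nat) (E0 E1 E2 : {set {set 'I_(r + k)}}) :
  0 < r -> 0 < k -> ~~ odd (r + k) -> k <= r ->
  ordered_partition (Kedges (r + k)) E0 E1 E2 ->
  #|E1| + 2 * #|E2| < 2 * (r + k - 1) ->
  exists M : {set {set 'I_(r + k)}},
    is_perfect_matching M /\ good_matching M E0 E1 E2.
Proof.
move=> r_gt0 _ even_rk _ E_part light.
apply: even_complete_good_perfect_matching even_rk E_part _.
  by rewrite addn_gt0 r_gt0.
by rewrite -subn1.
Qed.
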